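(* For any field $K$ there is a Bruhat decomposition $$G_{m\wr d}=\bigsqcup_{w\in\Sigma_m\wr\Sigma_d}B_m^d\,w\,B_m^d$$ (disjoint union).
   Context: $\Sigma_m\wr\Sigma_d=\Sigma_m^d\rtimes\Sigma_d$ with multiplication $w(g_1,\dots,g_d)=(g_{w^{-1}(1)},\dots,g_{w^{-1}(d)})w$, regarded as a subgroup of $\Sigma_{md}$ via $(w_i)_i\sigma:(j-1)m+a\mapsto(\sigma(j)-1)m+w_{\sigma(j)}(a)$. Over $K$: $B_m\subseteq\mathrm{GL}_m(K)$ upper triangular matrices; $N_{m\wr d}\subseteq\mathrm{GL}_{md}(K)$ monomial matrices whose underlying permutation lies in $\Sigma_m\wr\Sigma_d$; $B_m^d$ block diagonal matrices $\mathrm{diag}(b_1,\dots,b_d)$, $b_i\in B_m$; $G_{m\wr d}=\langle B_m^d,N_{m\wr d}\rangle$. An element $w\in\Sigma_m\wr\Sigma_d$ stands for any monomial matrix in $N_{m\wr d}$ with underlying permutation $w$ (the double coset $B_m^dwB_m^d$ is independent of the choice). *)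

From HB Require Import structures.
From mathcomp Require Import all_boot all_order all_algebra all_fingroup.
From mathcomp Require Import zify.
Set Implicit Arguments. Unset Strict Implicit. Unset Printing Implicit Defensive.
Import GRing.Theory.
Local Open Scope ring_scope.

(* 0-based index: block j in 'I_d, position a in 'I_m  |->  j*m + a in 'I_(m*d)
   (the paper's (j-1)m + a with 1-based indices). *)
Lemma wr_idx_proof (m d : nat) (j : 'I_d) (a : 'I_m) : (j * m + a < m * d)%N.
Proof. have := ltn_ord j; have := ltn_ord a; nia. Qed.

Definition wr_idx (m d : nat) (j : 'I_d) (a : 'I_m) : 'I_(m * d) :=
  Ordinal (wr_idx_proof j a).

(* The image of Sigma_m wr Sigma_d in Sigma_{md}:
   (w_i)_i sigma : (j-1)m + a |-> (sigma(j)-1)m + w_{sigma(j)}(a). *)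
Definition in_wreath (m d : nat) (p : {perm 'I_(m * d)}) : Prop :=
  exists (w : 'I_d -> 'S_m) (s : 'S_d),
    forall (j : 'I_d) (a : 'I_m), p (wr_idx j a) = wr_idx (s j) (w (s j) a).

Definition monomial_of (K : fieldType) (n : nat) (M : 'M[K]_n) (p : {perm 'I_n}) : Prop :=
  forall i j : 'I_n, M i j != 0 <-> i = p j.

Definition in_N (K : fieldType) (m d : nat) (M : 'M[K]_(m * d)) : Prop :=
  exists p : {perm 'I_(m * d)}, in_wreath p /\ monomial_of M p.

(* B_m^d: invertible block-diagonal matrices diag(b_1,...,b_d), b_i upper triangular *)
Definition in_Bd (K : fieldType) (m d : nat) (M : 'M[K]_(m * d)) : Prop :=
  M \in unitmx /\
  forall (j j' : 'I_d) (a a' : 'I_m),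
    M (wr_idx j a) (wr_idx j' a') != 0 -> j = j' /\ (a <= a')%N.

Inductive generated (K : fieldType) (n : nat) (S : 'M[K]_n -> Prop) : 'M[K]_n -> Prop :=
  | gen_one : generated S 1%:M
  | gen_mul x y : S x -> generated S y -> generated S (x *m y)
  | gen_mulV x y : S x -> generated S y -> generated S (invmx x *m y).

Definition in_G (K : fieldType) (m d : nat) (M : 'M[K]_(m * d)) : Prop :=
  generated (fun X => in_Bd X \/ in_N X) M.

(* double coset B_m^d w B_m^d, w given by its permutation p, represented by any
   monomial matrix with underlying permutation p *)
Definition in_dcoset (K : fieldType) (m d : nat) (p : {perm 'I_(m * d)})
    (M : 'M[K]_(m * d)) : Prop :=
  exists b1 b2 nw : 'M[K]_(m * d),
    [/\ in_Bd b1, in_Bd b2, monomial_of nw p & M = b1 *m nw *m b2].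

From mathcomp Require Import all_boot all_order all_algebra all_fingroup.
Set Implicit Arguments. Unset Strict Implicit. Unset Printing Implicit Defensive.
Import GRing.Theory.
Local Open Scope ring_scope.

(* Cutting the md coordinates into d consecutive blocks of size m, every
   generator of G sends each block into a single block, along a permutation of
   the d blocks; hence so does every element of G.  Gaussian elimination on
   such a matrix — in each column take the lowest nonzero entry as pivot, clear
   its row to the right by column operations and its column above by row
   operations — only uses upper triangular operations inside one block, i.e.
   elements of B_m^d, and ends with a monomial matrix that still permutes the
   blocks, i.e. an element of N_{m wr d}.  Uniqueness: the rank of the corner
   (rows >= i, columns < t) is invariant under multiplication by invertible
   upper triangular matrices on both sides, and for a monomial matrix with
   permutation w it counts the l < t with w(l) >= i, which determines w. *)

Lemma boolr_neq0 (K : fieldType) (b : bool) : ((b%:R : K) != 0) = b.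
Proof. by case: b; rewrite ?oner_eq0 ?eqxx. Qed.

Lemma rank_diag_mx (K : fieldType) (n : nat) (r : 'rV[K]_n) :
  \rank (diag_mx r) = (\sum_(k < n) (r ord0 k != 0%R))%N.
Proof.
elim: n r => [|n IHn] r; first by rewrite big_ord0; apply/eqP; rewrite -leqn0 rank_leq_row.
pose r' : 'rV_(1 + n) := r.
have -> : \rank (diag_mx r) = (\rank (diag_mx (lsubmx r')) + \rank (diag_mx (rsubmx r')))%N.
  by rewrite -rank_diag_block_mx -diag_mx_row hsubmxK.
rewrite IHn big_ord_recl; congr (_ + _)%N; last first.
  by apply: eq_bigr => k _; rewrite mxE; congr (r _ _ != 0); apply: val_inj.
rewrite rank_rV; congr nat_of_bool; apply/idP/idP; apply: contra => /eqP r0.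
  apply/eqP/matrixP => a b; rewrite !ord1 !mxE eqxx /= mulr1n -r0.
  by congr (r _ _); apply: val_inj.
have := congr1 (fun M : 'M[K]_1 => M ord0 ord0) r0; rewrite !mxE eqxx mulr1n => <-.
by apply/eqP; congr (r _ _); apply: val_inj.
Qed.

Section UpperTriangular.

Variables (K : fieldType) (n : nat).
Implicit Types (A B U W : 'M[K]_n) (p q : {perm 'I_n}).

Definition upper A := forall k l, A k l != 0 -> (k <= l)%N.

Definition borel U := U \in unitmx /\ upper U.

Lemma mulmx_entry_neq0 A B k l :
  (A *m B) k l != 0 -> exists i, A k i != 0 /\ B i l != 0.
Proof.
rewrite mxE => nz; case: (pickP (fun i => A k i * B i l != 0)) => [i|zero].
  by rewrite mulf_eq0 negb_or => /andP; exists i.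
by move: nz; rewrite big1 ?eqxx // => i _; apply/eqP/negbFE/zero.
Qed.

Lemma upper1 : upper 1%:M.
Proof. by move=> k l; rewrite mxE boolr_neq0 => /eqP ->. Qed.

Lemma upper_mul A B : upper A -> upper B -> upper (A *m B).
Proof. by move=> uA uB k l /mulmx_entry_neq0 [i [/uA + /uB]]; apply: leq_trans. Qed.

Lemma upper_unitmxP U : upper U -> reflect (forall k, U k k != 0) (U \in unitmx).
Proof.
move=> uU; rewrite unitmxE unitfE -det_tr det_trig; last first.
  apply/is_trig_mxP => k l lt_kl; rewrite mxE; apply: contraTeq lt_kl.
  by rewrite -leqNgt => /uU.
by under eq_bigr do rewrite mxE; apply: (iffP (prodf_neq0 _ _)) => H k //; apply: H.
Qed.

Lemma monomial_unitmx W p : monomial_of W p -> W \in unitmx.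
Proof.
move=> Wp; pose V := \matrix_(k, l) (if p k == l then (W l k)^-1 else 0).
suff /mulmx1_unit[] : W *m V = 1%:M by [].
apply/matrixP => a b; rewrite !mxE (bigD1 ((p^-1)%g b)) //= big1 ?addr0; last first.
  move=> c cb; rewrite mxE; case: eqP => [pcb|]; last by rewrite mulr0.
  by move: cb; rewrite -pcb permK eqxx.
have Wb : W b ((p^-1)%g b) != 0 by apply/Wp; rewrite permKV.
rewrite mxE permKV eqxx; case: eqVneq => [->|ne]; first by rewrite mulfV.
suff /eqP -> : W a ((p^-1)%g b) == 0 by rewrite mul0r.
by apply: contraNT ne => /Wp; rewrite permKV => ->.
Qed.

Definition rows_from (i : nat) : 'M[K]_n := diag_mx (\row_k (i <= k)%N%:R).
Definition cols_below (t : nat) : 'M[K]_n := diag_mx (\row_k (k < t)%N%:R).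

Lemma rows_from_borel U i : borel U ->
  exists2 V, V \in unitmx & rows_from i *m U = V *m rows_from i.
Proof.
move=> [+ uU] => /(upper_unitmxP uU) Udiag.
pose V := \matrix_(k, l) (if (i <= k)%N then U k l else (k == l)%:R).
have uV : upper V.
  move=> k l; rewrite mxE; case: ifP => _; first exact: uU.
  by rewrite boolr_neq0 => /eqP ->.
exists V.
  by apply/(upper_unitmxP uV) => k; rewrite mxE; case: ifP; rewrite ?eqxx ?oner_eq0.
apply/matrixP => k l; rewrite mul_mx_diag mul_diag_mx !mxE.
case: (leqP i k) => ik /=.
  have [->|/uU kl] := eqVneq (U k l) 0; first by rewrite mulr0 mul0r.
  by rewrite (leq_trans ik kl) mul1r mulr1.
case: eqVneq => [<-|]; last by rewrite mul0r mul0r.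
by rewrite leqNgt ik mulr0 mul0r.
Qed.

Lemma cols_below_borel U t : borel U ->
  exists2 V, V \in unitmx & U *m cols_below t = cols_below t *m V.
Proof.
move=> [+ uU] => /(upper_unitmxP uU) Udiag.
pose V := \matrix_(k, l) (if (l < t)%N then U k l else (k == l)%:R).
have uV : upper V.
  move=> k l; rewrite mxE; case: ifP => _; first exact: uU.
  by rewrite boolr_neq0 => /eqP ->.
exists V.
  by apply/(upper_unitmxP uV) => k; rewrite mxE; case: ifP; rewrite ?eqxx ?oner_eq0.
apply/matrixP => k l; rewrite mul_mx_diag mul_diag_mx !mxE.
case: (ltnP l t) => lt /=.
  have [->|/uU kl] := eqVneq (U k l) 0; first by rewrite mulr0 mul0r.
  by rewrite (leq_ltn_trans kl lt) mul1r mulr1.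
by case: eqVneq => [->|]; rewrite ltnNge ?lt ?mulr0 // mul0r.
Qed.

Lemma mxrank_unitl V A : V \in unitmx -> \rank (V *m A) = \rank A.
Proof.
by move=> uV; rewrite -mxrank_tr trmx_mul mxrankMfree ?mxrank_tr ?row_free_unit ?unitmx_tr.
Qed.

Definition corner_rank (i t : nat) A := \rank (rows_from i *m A *m cols_below t).

Lemma corner_rank_borel b1 b2 A i t :
  borel b1 -> borel b2 -> corner_rank i t (b1 *m A *m b2) = corner_rank i t A.
Proof.
move=> b1B b2B; have [V UV eV] := rows_from_borel i b1B.
have [W UW eW] := cols_below_borel t b2B.
rewrite /corner_rank !mulmxA eV -[_ *m b2 *m _]mulmxA eW mulmxA.
by rewrite mxrankMfree ?row_free_unit // -!mulmxA mxrank_unitl.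
Qed.

Definition corner_count p (i t : nat) := (\sum_(l < n) ((l < t) && (i <= p l)))%N.

Lemma corner_rank_monomial W p i t :
  monomial_of W p -> corner_rank i t W = corner_count p i t.
Proof.
move=> Wp; rewrite /corner_rank; have -> : rows_from i *m W *m cols_below t =
    W *m diag_mx (\row_l ((l < t) && (i <= p l))%N%:R).
  apply/matrixP => k l; rewrite !mul_mx_diag mul_diag_mx !mxE.
  have [->|/Wp ->] := eqVneq (W k l) 0; first by rewrite mulr0 !mul0r.
  by case: (i <= p l)%N; case: (l < t)%N; rewrite /= ?mul0r ?mulr0 ?mul1r ?mulr1.
rewrite (mxrank_unitl _ (monomial_unitmx Wp)) rank_diag_mx.
by apply: eq_bigr => l _; rewrite mxE boolr_neq0.
Qed.

Lemma corner_countS p i (l : 'I_n) :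
  corner_count p i l.+1 = (corner_count p i l + (i <= p l))%N.
Proof.
rewrite /corner_count [LHS](bigD1 l) // [in RHS](bigD1 l) //= ltnSn ltnn addnC.
congr (_ + _)%N; apply: eq_bigr => k kl; rewrite ltnS leq_eqVlt.
by rewrite (_ : (k == l :> nat) = false) //; apply: negbTE.
Qed.

Lemma corner_count_inj p q :
  (forall i t, corner_count p i t = corner_count q i t) -> p = q.
Proof.
move=> pq; apply/permP => l; apply: val_inj; apply/eqP; rewrite eqn_leq.
have leE i : (i <= p l)%N = (i <= q l)%N.
  have /eqP := pq i l.+1; rewrite !corner_countS pq eqn_add2l.
  by case: (i <= p l)%N; case: (i <= q l)%N.
by rewrite -leE leqnn leE leqnn.
Qed.

Lemma borel_cell_uniq b1 b2 c1 c2 W W' p q :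
  borel b1 -> borel b2 -> borel c1 -> borel c2 ->
  monomial_of W p -> monomial_of W' q ->
  b1 *m W *m b2 = c1 *m W' *m c2 -> p = q.
Proof.
move=> b1B b2B c1B c2B Wp Wq e; apply: corner_count_inj => i t.
rewrite -(corner_rank_monomial i t Wp) -(corner_rank_monomial i t Wq).
by rewrite -(corner_rank_borel _ _ _ b1B b2B) e corner_rank_borel.
Qed.

End UpperTriangular.

Section BlockPattern.

Variables (K : fieldType) (n : nat) (T : finType) (c : 'I_n -> T).
Implicit Types (A B U V W X : 'M[K]_n).

Definition sends_blocks (f : T -> T) A := forall k l, A k l != 0 -> c k = f (c l).

Definition block_borel A := borel A /\ sends_blocks id A.

Definition block_monomial A := A \in unitmx /\ exists s : {perm T}, sends_blocks s A.

Lemma sends_blocks_mul f g A B :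
  sends_blocks f A -> sends_blocks g B -> sends_blocks (f \o g) (A *m B).
Proof. by move=> fA gB k l /mulmx_entry_neq0 [i [/fA -> /gB ->]]. Qed.

Lemma sends_blocks1 : sends_blocks id 1%:M.
Proof. by move=> k l; rewrite mxE boolr_neq0 => /eqP ->. Qed.

Lemma block_borel1 : block_borel 1%:M.
Proof. by split; [split; [exact: unitmx1 | exact: upper1] | exact: sends_blocks1]. Qed.

Lemma block_borel_mul A B : block_borel A -> block_borel B -> block_borel (A *m B).
Proof.
move=> [[UA uA] bA] [[UB uB] bB]; split; last exact: sends_blocks_mul bA bB.
by split; [rewrite unitmx_mul UA | exact: upper_mul].
Qed.

Definition block_proj (J : T) : 'M[K]_n := diag_mx (\row_k (c k == J)%:R).

Lemma sends_blocks_proj f A J :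
  injective f -> sends_blocks f A -> A *m block_proj J = block_proj (f J) *m A.
Proof.
move=> f_inj fA; apply/matrixP => k l; rewrite mul_mx_diag mul_diag_mx !mxE.
have [->|/fA ->] := eqVneq (A k l) 0; first by rewrite mulr0 mul0r.
by rewrite (inj_eq f_inj) mulrC.
Qed.

Lemma sends_blocks_inv (s : {perm T}) A :
  A \in unitmx -> sends_blocks s A -> sends_blocks (s^-1)%g (invmx A).
Proof.
move=> UA sA k l nz; set J := c k.
have : block_proj J *m invmx A = invmx A *m block_proj (s J).
  rewrite -[LHS]mul1mx -(mulVmx UA) -!mulmxA (mulmxA A) (sends_blocks_proj J perm_inj sA).
  by rewrite -!mulmxA mulmxV // mulmx1.
move/matrixP/(_ k l); rewrite mul_mx_diag mul_diag_mx !mxE eqxx mul1r.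
by case: eqP => [->|_]; [rewrite permK | rewrite mulr0 => /eqP; rewrite (negbTE nz)].
Qed.

Lemma block_monomial1 : block_monomial 1%:M.
Proof. by split; [exact: unitmx1 | exists 1%g => k l /sends_blocks1 ->; rewrite perm1]. Qed.

Lemma block_monomial_mul A B :
  block_monomial A -> block_monomial B -> block_monomial (A *m B).
Proof.
move=> [UA [s sA]] [UB [t tB]]; split; first by rewrite unitmx_mul UA.
by exists (t * s)%g => k l /(sends_blocks_mul sA tB) ->; rewrite permM.
Qed.

Lemma block_monomial_inv A : block_monomial A -> block_monomial (invmx A).
Proof.
move=> [UA [s sA]]; split; first by rewrite unitmx_inv.
by exists (s^-1)%g; apply: sends_blocks_inv.
Qed.

Lemma block_borel_monomial A : block_borel A -> block_monomial A.
Proof. by move=> [[UA _] bA]; split=> //; exists 1%g => k l /bA ->; rewrite perm1. Qed.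

Lemma unipotent_block_borel X :
  (forall k l, X k l != 0 -> c k = c l /\ (k < l)%N) -> X *m X = 0 ->
  [/\ block_borel (1%:M - X), block_borel (1%:M + X) & (1%:M + X) *m (1%:M - X) = 1%:M].
Proof.
move=> Xblk XX0.
have inv : (1%:M + X) *m (1%:M - X) = 1%:M.
  by rewrite mulmxDl !mulmxBr !mul1mx mulmx1 XX0 subr0 subrK.
have [Uplus Uminus] := mulmx1_unit inv.
have near_one (Y : 'M[K]_n) : (forall k l, Y k l != 0 -> (k == l) || (X k l != 0)) ->
    Y \in unitmx -> block_borel Y.
  move=> YX UY; have YE k l : Y k l != 0 -> c k = c l /\ (k <= l)%N.
    by case/YX/orP => [/eqP -> // | /Xblk [-> /ltnW]].
  by split; [split=> // k l /YE [] | move=> k l /YE []].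
split=> //; apply: near_one => // k l; rewrite !mxE;
  have [-> //|kl] := eqVneq k l; by rewrite /= add0r ?oppr_eq0.
Qed.

Lemma clear_right_of_pivot f A r j :
  injective f -> sends_blocks f A -> A r j != 0 ->
  exists V W, [/\ block_borel V, block_borel W, W *m V = 1%:M,
    forall k l : 'I_n, (l <= j)%N || (A k j == 0) -> (A *m V) k l = A k l
    & forall l : 'I_n, (j < l)%N -> (A *m V) r l = 0].
Proof.
move=> f_inj fA Arj.
pose X := \matrix_(k, l) (if (k == j) && (j < l)%N then A r l / A r j else 0).
have AXE B k l : (B *m X) k l = B k j * X j l.
  rewrite mxE (bigD1 j) //= big1 ?addr0 // => i ij.
  by rewrite mxE (negbTE ij) mulr0.
have Xblk k l : X k l != 0 -> c k = c l /\ (k < l)%N.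
  rewrite mxE; case: andP => [[/eqP -> jl] | _]; last by rewrite eqxx.
  rewrite mulf_eq0 negb_or => /andP[Arl _]; split=> //.
  by apply: f_inj; rewrite -(fA _ _ Arj) -(fA _ _ Arl).
have XX0 : X *m X = 0 by apply/matrixP => k l; rewrite AXE !mxE ltnn andbF mul0r.
have [bV bW WV] := unipotent_block_borel Xblk XX0.
have AVE k l : (A *m (1%:M - X)) k l = A k l - A k j * X j l.
  by rewrite mulmxBr mulmx1 -AXE !mxE.
exists (1%:M - X), (1%:M + X); split=> // [k l | l jl]; rewrite AVE mxE eqxx /=.
  by case/orP=> [lj | /eqP ->]; rewrite ?(leq_gtF lj) ?mulr0 ?mul0r subr0.
by rewrite jl mulrC divfK // subrr.
Qed.

Lemma clear_above_pivot f A r j :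
  sends_blocks f A -> A r j != 0 ->
  exists V W, [/\ block_borel V, block_borel W, W *m V = 1%:M,
    forall k l : 'I_n, (r <= k)%N || (A r l == 0) -> (V *m A) k l = A k l
    & forall k : 'I_n, (k < r)%N -> (V *m A) k j = 0].
Proof.
move=> fA Arj.
pose Y := \matrix_(k, l) (if (l == r) && (k < r)%N then A k j / A r j else 0).
have YAE B k l : (Y *m B) k l = Y k r * B r l.
  rewrite mxE (bigD1 r) //= big1 ?addr0 // => i ir.
  by rewrite mxE (negbTE ir) mul0r.
have Yblk k l : Y k l != 0 -> c k = c l /\ (k < l)%N.
  rewrite mxE; case: andP => [[/eqP -> kr] | _]; last by rewrite eqxx.
  rewrite mulf_eq0 negb_or => /andP[Akj _]; split=> //.
  by rewrite (fA _ _ Akj) (fA _ _ Arj).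
have YY0 : Y *m Y = 0 by apply/matrixP => k l; rewrite YAE !mxE ltnn andbF mulr0.
have [bV bW WV] := unipotent_block_borel Yblk YY0.
have VAE k l : ((1%:M - Y) *m A) k l = A k l - Y k r * A r l.
  by rewrite mulmxBl mul1mx -YAE !mxE.
exists (1%:M - Y), (1%:M + Y); split=> // [k l | k kr]; rewrite VAE mxE eqxx /=.
  by case/orP=> [rk | /eqP ->]; rewrite ?(leq_gtF rk) ?mulr0 ?mul0r subr0.
by rewrite kr divfK // subrr.
Qed.

Lemma lowest_pivot A (j : 'I_n) : A \in unitmx ->
  exists r, A r j != 0 /\ forall k, A k j != 0 -> (k <= r)%N.
Proof.
move=> UA; have [k0 Ak0j] : exists k, A k j != 0.
  apply/existsP; apply: contraTT UA => /existsPn Aj0.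
  rewrite unitmxE unitfE negbK (expand_det_col A j) big1 // => k _.
  by move/negbNE/eqP: (Aj0 k) ->; rewrite mul0r.
by case: (@arg_maxnP _ k0 (fun k => A k j != 0) val Ak0j) => r Arj rmax; exists r.
Qed.

Definition cleared_cols A (t : nat) := forall l : 'I_n, (l < t)%N -> exists r,
  [/\ A r l != 0, forall k, k != r -> A k l = 0 & forall l', l' != l -> A r l' = 0].

Lemma cleared_cols_pivot_row A (j r l : 'I_n) :
  cleared_cols A j -> A r j != 0 -> (l < j)%N -> A r l = 0.
Proof.
move=> Aj Arj lj; have [rl [_ colrl rowrl]] := Aj l lj.
have [erl|/colrl //] := eqVneq r rl.
by move: Arj; rewrite erl rowrl ?eqxx //; apply: contraTneq lj => ->; rewrite ltnn.
Qed.

Lemma cleared_colsS (s : {perm T}) A (j : 'I_n) :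
  A \in unitmx -> sends_blocks s A -> cleared_cols A j ->
  exists b1 b2 A', [/\ block_borel b1, block_borel b2, A = b1 *m A' *m b2,
     A' \in unitmx /\ sends_blocks s A' & cleared_cols A' j.+1].
Proof.
move=> UA sA Aj.
(* The pivot is the lowest nonzero entry of column j, so once the column is
   cleared above it, it is the only nonzero entry of that column. *)
have [r [Arj rmax]] := lowest_pivot j UA.
have Arl := cleared_cols_pivot_row Aj Arj.
have [V2 [W2 [bV2 bW2 WV2 A1E A1r]]] := clear_right_of_pivot perm_inj sA Arj.
pose A1 := A *m V2.
have A1j k : A1 k j = A k j by rewrite A1E ?leqnn.
have A1r' (l : 'I_n) : l != j -> A1 r l = 0.
  move=> lj; case: (ltngtP l j) => [lt|gt|/val_inj/eqP]; last by rewrite (negbTE lj).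
    by rewrite A1E ?(ltnW lt) // Arl.
  exact: A1r.
have sA1 : sends_blocks s A1 := sends_blocks_mul sA bV2.2.
have A1rj : A1 r j != 0 by rewrite A1j.
have [V1 [W1 [bV1 bW1 WV1 A2E A2j]]] := clear_above_pivot sA1 A1rj.
pose A2 := V1 *m A1.
have A2A1 k (l : 'I_n) : l != j -> A2 k l = A1 k l.
  by move=> lj; rewrite A2E // A1r' ?eqxx ?orbT.
have A2A k (l : 'I_n) : (l < j)%N -> A2 k l = A k l.
  move=> lt; rewrite A2A1 ?A1E ?(ltnW lt) //.
  by apply: contraTneq lt => ->; rewrite ltnn.
exists W1, W2, A2; split=> //.
- by rewrite /A2 /A1 !mulmxA WV1 mul1mx -mulmxA (mulmx1C WV2) mulmx1.
- split; last exact: sends_blocks_mul bV1.2 sA1.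
  by rewrite !unitmx_mul UA (proj1 bV1.1) (proj1 bV2.1).
move=> l; rewrite ltnS leq_eqVlt => /orP[/eqP/val_inj -> | lt].
  exists r; split=> [| k kr | l' l'j]; first by rewrite A2E ?leqnn.
    case: (ltnP k r) => [lt|ge]; first exact: A2j.
    rewrite A2E ?ge // A1j; have [//|/rmax le_kr] := eqVneq (A k j) 0.
    by rewrite -(inj_eq val_inj) eqn_leq le_kr ge in kr.
  by rewrite A2A1 // A1r'.
have [rl [Arll colrl rowrl]] := Aj l lt.
have Arlj : A rl j = 0 by apply: rowrl; apply: contraTneq lt => ->; rewrite ltnn.
exists rl; split=> [| k krl | l' l'l]; first by rewrite A2A.
  by rewrite A2A // colrl.
have [->|l'j] := eqVneq l' j; last by rewrite A2A1 // A1E ?Arlj ?eqxx ?orbT // rowrl.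
by case: (ltnP rl r) => [lt_rl|ge]; [exact: A2j | rewrite A2E ?ge // A1j].
Qed.

Lemma block_bruhat_cleared (s : {perm T}) A t :
  A \in unitmx -> sends_blocks s A -> (t <= n)%N ->
  exists b1 b2 A', [/\ block_borel b1, block_borel b2, A = b1 *m A' *m b2,
     A' \in unitmx /\ sends_blocks s A' & cleared_cols A' t].
Proof.
move=> UA sA; elim: t => [_ | t IHt lt_tn].
  by exists 1%:M, 1%:M, A; rewrite mul1mx mulmx1; split=> //; exact: block_borel1.
have [b1 [b2 [A' [bb1 bb2 -> [UA' sA'] cA']]]] := IHt (ltnW lt_tn).
have [c1 [c2 [A'' [bc1 bc2 -> UsA'' cA'']]]] := @cleared_colsS s A' (Ordinal lt_tn) UA' sA' cA'.
exists (b1 *m c1), (c2 *m b2), A''; split=> //; rewrite ?mulmxA //; exact: block_borel_mul.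
Qed.

Lemma cleared_cols_monomial A : cleared_cols A n -> exists p, monomial_of A p.
Proof.
move=> cA; have [f fP] := fin_all_exists (fun l => cA l (ltn_ord l)).
have f_inj : injective f.
  move=> l l' e; case: (fP l) => _ _ rowl; case: (fP l') => Afl' _ _.
  by apply/eqP; apply: contraNT Afl' => ll'; rewrite -e rowl 1?eq_sym.
exists (perm f_inj) => k l; rewrite permE; split=> [Akl | ->]; last by case: (fP l).
case: (fP l) => _ colfl _; have [//|/colfl Akl0] := eqVneq k (f l).
by rewrite Akl0 eqxx in Akl.
Qed.

Lemma block_bruhat A : block_monomial A ->
  exists p : {perm 'I_n}, (exists s : {perm T}, forall l, c (p l) = s (c l)) /\
    exists b1 b2 W, [/\ block_borel b1, block_borel b2, monomial_of W p & A = b1 *m W *m b2].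
Proof.
move=> [UA [s sA]].
have [b1 [b2 [W [bb1 bb2 eA [_ sW] cW]]]] := block_bruhat_cleared UA sA (leqnn n).
have [p Wp] := cleared_cols_monomial cW.
by exists p; split; [exists s => l; apply: sW; apply/Wp | exists b1, b2, W].
Qed.

End BlockPattern.

Section WreathBlocks.

Variables (m d : nat).
Implicit Types (k : 'I_(m * d)) (p : {perm 'I_(m * d)}).

Lemma wr_block_proof k : (k %/ m < d)%N.
Proof.
have := ltn_ord k; move: (val k) => x; case: (posnP m) => [-> | m_gt0]; first by rewrite mul0n.
by rewrite ltn_divLR // mulnC.
Qed.

Lemma wr_offset_proof k : (k %% m < m)%N.
Proof.
have := ltn_ord k; move: (val k) => x; case: (posnP m) => [-> | m_gt0]; first by rewrite mul0n.
by rewrite ltn_mod.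
Qed.

Definition wr_block k : 'I_d := Ordinal (wr_block_proof k).
Definition wr_offset k : 'I_m := Ordinal (wr_offset_proof k).

Lemma wr_idxK k : wr_idx (wr_block k) (wr_offset k) = k.
Proof. by apply: val_inj; rewrite /= -divn_eq. Qed.

Lemma wr_block_idx (j : 'I_d) (a : 'I_m) : wr_block (wr_idx j a) = j.
Proof.
by apply: val_inj; rewrite /= divnMDl ?divn_small ?addn0 // (leq_ltn_trans _ (ltn_ord a)).
Qed.

Lemma wr_offset_idx (j : 'I_d) (a : 'I_m) : wr_offset (wr_idx j a) = a.
Proof. by apply: val_inj; rewrite /= modnMDl modn_small. Qed.

Lemma in_BdE (K : fieldType) (M : 'M[K]_(m * d)) : in_Bd M <-> block_borel wr_block M.
Proof.
split=> [[UM BM] | [[UM uM] bM]].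
  split=> [|k l]; [split=> // k l|]; rewrite -(wr_idxK k) -(wr_idxK l) => /BM [<- le_aa'];
    by rewrite ?wr_block_idx //= leq_add2l.
split=> // j j' a a' nz; have := bM _ _ nz; rewrite !wr_block_idx => ej; split=> //.
by move: (uM _ _ nz); rewrite ej /= leq_add2l.
Qed.

Lemma in_wreathP p :
  in_wreath p <-> exists s : {perm 'I_d}, forall k, wr_block (p k) = s (wr_block k).
Proof.
split=> [[w [s ps]] | [s ps]].
  by exists s => k; rewrite -{1}(wr_idxK k) ps wr_block_idx.
have w_inj J : injective (fun a => wr_offset (p (wr_idx ((s^-1)%g J) a))).
  move=> a b /= e; rewrite -(wr_offset_idx (s^-1 J)%g a) -(wr_offset_idx (s^-1 J)%g b).
  congr wr_offset; apply: (@perm_inj _ p).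
  by rewrite -(wr_idxK (p _)) -[p (wr_idx _ b)]wr_idxK e !ps !wr_block_idx.
exists (fun J => perm (w_inj J)), s => j a.
by rewrite -(wr_idxK (p _)) ps wr_block_idx permE /= permK.
Qed.

Lemma in_N_block_monomial (K : fieldType) (M : 'M[K]_(m * d)) :
  in_N M -> block_monomial wr_block M.
Proof.
move=> [p [/in_wreathP [s ps] Mp]]; split; first exact: monomial_unitmx Mp.
by exists s => k l /Mp ->.
Qed.

Lemma in_G_block_monomial (K : fieldType) (M : 'M[K]_(m * d)) :
  in_G M -> block_monomial wr_block M.
Proof.
have generator X : in_Bd X \/ in_N X -> block_monomial wr_block X.
  by case=> [/in_BdE/block_borel_monomial | /in_N_block_monomial].
elim=> [| X Y /generator bX _ | X Y /generator bX _]; first exact: block_monomial1.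
  exact: block_monomial_mul.
exact/block_monomial_mul/block_monomial_inv.
Qed.

End WreathBlocks.

Theorem corollary2p7 (K : fieldType) (m d : nat) :
  (forall M : 'M[K]_(m * d),
     in_G M <-> exists p : {perm 'I_(m * d)}, in_wreath p /\ in_dcoset p M) /\
  (forall (p q : {perm 'I_(m * d)}) (M : 'M[K]_(m * d)),
     in_wreath p -> in_wreath q -> in_dcoset p M -> in_dcoset q M -> p = q).
Proof.
split=> [M | p q M _ _ [b1 [b2 [W [/in_BdE[bb1 _] /in_BdE[bb2 _] Wp ->]]]]]; last first.
  move=> [c1 [c2 [W' [/in_BdE[bc1 _] /in_BdE[bc2 _] Wq e]]]].
  exact: borel_cell_uniq bb1 bb2 bc1 bc2 Wp Wq e.
split=> [/in_G_block_monomial/block_bruhat [p [wp [b1 [b2 [W [bb1 bb2 Wp ->]]]]]] |].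
  by exists p; split; [apply/in_wreathP | exists b1, b2, W; split=> //; apply/in_BdE].
move=> [p [wp [b1 [b2 [W [B1 B2 Wp ->]]]]]].
rewrite -[b2]mulmx1 !mulmxA -!mulmxA.
apply: gen_mul; [by left | apply: gen_mul; [by right; exists p | ]].
by apply: gen_mul; [left | exact: gen_one].
Qed.
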